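(* At the end of every iteration of the main loop of MAPTree, for every OR node $u\in\mathcal G'$, $UB[u]$ equals the minimum cost of a partial solution rooted at $u$ in $\mathcal G'$ (and $UB[u]=+\infty$ if no such partial solution exists).
   Context: Let $x_1,\dots,x_N\in\{0,1\}^F$ be a binary dataset $\mathcal X$ with labels $\mathcal Y\in\{0,1\}^N$, $[N]=\{1,\dots,N\}$. For $\mathcal I\subseteq[N]$, $f\in[F]$, $k\in\{0,1\}$ let $\mathcal I|_{f=k}=\{i\in\mathcal I:(x_i)_f=k\}$, $c^k(\mathcal I)=|\{i\in\mathcal I:y_i=k\}|$, $\mathcal V(\mathcal I)=\{f:\mathcal I|_{f=0}\neq\emptyset\text{ and }\mathcal I|_{f=1}\neq\emptyset\}$. Fix $\rho^1,\rho^0>0$, $\alpha\in(0,1)$, $\beta\ge0$; $\ell_{\rm leaf}(c^1,c^0)=B(c^1+\rho^1,c^0+\rho^0)/B(\rho^1,\rho^0)$ ($B$ the Beta function), $p_{\rm split}(d)=\alpha(1+d)^{-\beta}$, $p_{\rm leaf}(d,\mathcal I)=1$ if $\mathcal V(\mathcal I)=\emptyset$ else $1-p_{\rm split}(d)$, $p_{\rm inner}(d,\mathcal I)=0$ if $\mathcal V(\mathcal I)=\emptyset$ else $p_{\rm split}(d)/|\mathcal V(\mathcal I)|$; $-\log0=+\infty$, and a minimum over an empty set is $+\infty$. Graph $\mathcal G=\mathcal G_{\mathcal X,\mathcal Y}$: for nonempty $\mathcal I\subseteq[N]$, $d\in\{0,\dots,F\}$, an OR node $o_{\mathcal I,d}$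 with terminal child $t_{\mathcal I,d}$ (edge cost $-\log p_{\rm leaf}(d,\mathcal I)-\log\ell_{\rm leaf}(c^1(\mathcal I),c^0(\mathcal I))$); for $d<F$, $f\in\mathcal V(\mathcal I)$, an AND child $a_{\mathcal I,d,f}$ (edge cost $-\log p_{\rm inner}(d,\mathcal I)$) with cost-$0$ edges to $o_{\mathcal I|_{f=0},d+1}$, $o_{\mathcal I|_{f=1},d+1}$; root $r=o_{[N],0}$; only nodes reachable from $r$ kept. A partial solution rooted at an OR node $u$ in $\mathcal G'$ is a set $\mathcal S\subseteq\mathcal G'$ containing $u$, all of whose nodes are reachable from $u$ inside $\mathcal S$, such that every AND node of $\mathcal S$ has both children in $\mathcal S$ and every OR node of $\mathcal S$ has exactly one child in $\mathcal S$; its cost is the sum of the costs of edges $v\to w$ with $v,w\in\mathcal S$. Heuristic: $h(o_{\mathcal I,d})=-\max\{\log\ell_{\rm leaf}(c^1(\mathcal I),c^0(\mathcal I)),\log p_{\rm split}(d)+\log\ell_{\rm leaf}(c^1(\mathcal I),0)+\log\ell_{\rm leaf}(0,c^0(\mathcal I))\}$. MAPTree maintains a node set $\mathcal G'$, a set $\mathcal E$ of expanded OR nodes, and values $LB[u],UB[u]\in\mathbb R\cup\{+\infty\}$ for OR nodes ($UB[u]=+\infty$ until set); for an AND node $a$ with children $o_0,o_1$, $LB[a]=LB[o_0]+LB[o_1]$ and $UB[a]=UB[o_0]+UB[o_1]$. Initialize $\mathcal G'=\{r\}$, $\mathcal E=\emptyset$, $LB[r]=h(r)$, $UB[r]=+\infty$.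 While $LB[r]<UB[r]$ (and optionally while time remains): (1) $o:=r$; while $o\in\mathcal E$, choose an AND child $a^*$ of $o$ minimizing $\mathrm{cost}(o,a)+LB[a]$, with children $o_0$ (value-0 side) and $o_1$, and set $o:=o_0$ if $UB[o_0]-LB[o_0]>UB[o_1]-LB[o_1]$, else $o:=o_1$. (2) Add $o$ to $\mathcal E$ and its terminal child to $\mathcal G'$; for each AND child $a$ of $o$ with children $o_0,o_1$, add $a,o_0,o_1$ to $\mathcal G'$ and set $LB[o_0]:=h(o_0)$, $LB[o_1]:=h(o_1)$. (3) Starting from $Q=\{o\}$, repeatedly remove from $Q$ an OR node $u$ of maximal depth, compute $v=\min\{\min_a(\mathrm{cost}(u,a)+LB[a]),\mathrm{cost}(u,t_u)\}$ over the AND children $a$ and terminal child $t_u$ of $u$; if $v>LB[u]$, set $LB[u]:=v$ and add to $Q$ every OR node of $\mathcal G'$ that is the parent of an AND node of $\mathcal G'$ having $u$ as child. (4) The same with $UB$ in place of $LB$, updating when $v<UB[u]$. *)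

From HB Require Import structures.
From mathcomp Require Import all_boot all_order all_algebra.
From mathcomp Require Import all_classical all_reals all_analysis.
Import Order.TTheory GRing.Theory Num.Theory.
Local Open Scope ring_scope.


Definition BetaR {R : realType} (a b : R) : R :=
  fine (\int[@lebesgue_measure R]_(t in `]0%R, 1%R[%classic)
          ((t `^ (a - 1)) * ((1 - t) `^ (b - 1)))%:E)%E.

Section MAPTree.
Variables (R : realType) (N F : nat).
Variables (X : 'I_N -> 'I_F -> bool) (Y : 'I_N -> bool).
Variables (rho1 rho0 alpha beta : R).

Definition orkey := ({set 'I_N} * 'I_F.+1)%type.
Definition node := (orkey + orkey + (orkey * 'I_F))%type.
Definition OrN (J : {set 'I_N}) (d : 'I_F.+1) : node := inl (inl (J, d)).
Definition TermN (J : {set 'I_N}) (d : 'I_F.+1) : node := inl (inr (J, d)).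
Definition AndN (J : {set 'I_N}) (d : 'I_F.+1) (f : 'I_F) : node := inr ((J, d), f).

Definition isOr (u : node) : bool := if u is inl (inl _) then true else false.
Definition isAnd (u : node) : bool := if u is inr _ then true else false.
Definition depth (u : node) : nat :=
  match u with
  | inl (inl (_, d)) | inl (inr (_, d)) | inr ((_, d), _) => d
  end.

Definition restr (J : {set 'I_N}) (f : 'I_F) (k : bool) : {set 'I_N} :=
  [set i in J | X i f == k].
Definition Vset (J : {set 'I_N}) : {set 'I_F} :=
  [set f : 'I_F | (restr J f false != finset.set0) && (restr J f true != finset.set0)].
Definition cnt (k : bool) (J : {set 'I_N}) : nat := #|[set i in J | Y i == k]|.

Definition dsucc (d : 'I_F.+1) : 'I_F.+1 := inord d.+1.

(* children of an AND node a_{J,d,f}: k = false is the value-0 side o_0 *)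
Definition andch (k : bool) (a : node) : node :=
  match a with inr ((J, d), f) => OrN (restr J f k) (dsucc d) | _ => a end.
Definition term (u : node) : node :=
  match u with inl (inl (J, d)) => TermN J d | _ => u end.

Definition edge (u w : node) : bool :=
  match u, w with
  | inl (inl (J, d)), inl (inr (J', d')) =>
      (J != finset.set0) && (J' == J) && (d' == d)
  | inl (inl (J, d)), inr ((J', d'), f) =>
      [&& J != finset.set0, J' == J, d' == d, (d < F)%N & f \in Vset J]
  | inr ((J, d), f), inl (inl (J', d')) =>
      [&& J != finset.set0, (d < F)%N, f \in Vset J, d' == dsucc d &
          (J' == restr J f false) || (J' == restr J f true)]
  | _, _ => false
  end.

Definition root : node := OrN [set: 'I_N] ord0.

Definition nlog (x : R) : \bar R := if x <= 0 then +oo%E else (- ln x)%:E.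
Definition psplit (d : nat) : R := alpha * (1 + d%:R) `^ (- beta).
Definition lleaf (c1 c0 : nat) : R :=
  BetaR (c1%:R + rho1) (c0%:R + rho0) / BetaR rho1 rho0.
Definition pleaf (d : nat) (J : {set 'I_N}) : R :=
  if Vset J == finset.set0 then 1 else 1 - psplit d.
Definition pinner (d : nat) (J : {set 'I_N}) : R :=
  if Vset J == finset.set0 then 0 else psplit d / #|Vset J|%:R.

(* cost of the edge u -> w (meaningful when edge u w) *)
Definition ecost (u w : node) : \bar R :=
  match u, w with
  | inl (inl (J, d)), inl (inr _) =>
      (nlog (pleaf d J) + nlog (lleaf (cnt true J) (cnt false J)))%E
  | inl (inl (J, d)), inr _ => nlog (pinner d J)
  | _, _ => 0%E
  end.

Definition h (u : node) : \bar R :=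
  match u with
  | inl (inl (J, d)) =>
      (- Order.max (ln (lleaf (cnt true J) (cnt false J)))
           (ln (psplit d) + ln (lleaf (cnt true J) 0)
              + ln (lleaf 0 (cnt false J))))%:E
  | _ => 0%E
  end.

Definition partial_sol (Gp : {set node}) (u : node) (S : {set node}) : bool :=
  [&& S \subset Gp, u \in S,
      [forall v in S, connect [rel x y | [&& edge x y, x \in S & y \in S]] u v],
      [forall a in S, isAnd a ==> [forall w, edge a w ==> (w \in S)]] &
      [forall o in S, isOr o ==> (#|[set w in S | edge o w]| == 1)%N]].

Definition ps_cost (S : {set node}) : \bar R :=
  (\sum_(v in S) \sum_(w in S | edge v w) ecost v w)%E.

Definition min_ps (Gp : {set node}) (u : node) : \bar R :=
  \big[Order.min/+oo%E]_(S : {set node} | partial_sol Gp u S) ps_cost S.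

Record state := State {
  Gp : {set node};
  Ex : {set node};
  LB : node -> \bar R;
  UB : node -> \bar R }.

(* LB / UB of an AND node *)
Definition valA (v : node -> \bar R) (a : node) : \bar R :=
  (v (andch false a) + v (andch true a))%E.

Definition init : state := State [set root] finset.set0 h (fun _ => +oo%E).

Definition gap (s : state) (o : node) : \bar R := (UB s o - LB s o)%E.

(* step (1): descent from the root to a non-expanded OR node
   (ties broken arbitrarily) *)
Inductive descend (s : state) : node -> node -> Prop :=
| desc_stop o : o \notin Ex s -> descend s o o
| desc_step o a o' : o \in Ex s -> edge o a -> isAnd a ->
    (forall a', edge o a' -> isAnd a' ->
       (ecost o a + valA (LB s) a <= ecost o a' + valA (LB s) a')%E) ->
    descend s (if (gap s (andch true a) < gap s (andch false a))%E
               then andch false a else andch true a) o' ->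
    descend s o o'.

Definition expand (s : state) (o : node) : state :=
  State (Gp s :|: [set w | edge o w] :|: [set w | [exists a, edge o a && edge a w]])
        (o |: Ex s)
        (fun w => if [exists a, [&& edge o a, isAnd a & edge a w]] then h w else LB s w)
        (UB s).

Definition orval (v : node -> \bar R) (u : node) : \bar R :=
  Order.min (\big[Order.min/+oo%E]_(a | edge u a && isAnd a) (ecost u a + valA v a)%E)
            (ecost u (term u)).

Definition parents (G' : {set node}) (u : node) : {set node} :=
  [set w in G' | isOr w && [exists a in G', [&& isAnd a, edge w a & edge a u]]].

(* steps (3)/(4): backward propagation with queue Q; [better new old] is
   new > old for LB and new < old for UB; removal of a node of maximal depth
   (ties broken arbitrarily) *)
Inductive propagate (better : \bar R -> \bar R -> bool) (G' : {set node}) :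
    {set node} -> (node -> \bar R) -> (node -> \bar R) -> Prop :=
| prop_done v : propagate better G' finset.set0 v v
| prop_step (Q : {set node}) (v v' : node -> \bar R) (u : node) : u \in Q -> (forall w, w \in Q -> (depth w <= depth u)%N) ->
    propagate better G'
      (if better (orval v u) (v u) then (Q :\ u) :|: parents G' u else Q :\ u)
      (if better (orval v u) (v u)
       then (fun w => if w == u then orval v u else v w) else v) v' ->
    propagate better G' Q v v'.

Definition iteration (s s' : state) : Prop :=
  (LB s root < UB s root)%E /\
  exists o, descend s root o /\
    exists lb ub,
      propagate (fun nw old => old < nw)%E (Gp (expand s o)) [set o] (LB (expand s o)) lb /\
      propagate (fun nw old => nw < old)%E (Gp (expand s o)) [set o] (UB (expand s o)) ub /\
      s' = State (Gp (expand s o)) (Ex (expand s o)) lb ub.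

Inductive reachable : state -> Prop :=
| reach_init : reachable init
| reach_step s s' : reachable s -> iteration s s' -> reachable s'.

End MAPTree.

Arguments Gp {R N F} s.
Arguments Ex {R N F} s.
Arguments LB {R N F} s _.
Arguments UB {R N F} s _.

(* UB is kept equal to the minimum cost m(u) of a partial solution rooted at u in G'.  At an expanded OR node m satisfies the Bellman
   equation m(u) = min (c(u,t_u), min_a c(u,a) + m(a_0) + m(a_1)): a partial solution
   through an AND child a splits into sub-solutions below a_0 and a_1 whose costs add up,
   because the sample sets of a_0 and a_1 are disjoint and only shrink along edges.  At an
   unexpanded OR node m = +oo, since such a node has no child in G'.
   Backward propagation maintains m <= UB on G', and UB(u) <= (UB recomputed at u) at every
   expanded u outside the queue; once the queue is empty these two bounds force UB = m, by
   induction on the remaining depth F - d. *)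

From Pilot Require Import Defs.
From HB Require Import structures.
From mathcomp Require Import all_boot all_order all_algebra.
From mathcomp Require Import all_classical all_reals all_analysis.
From mathcomp Require Import zify.
Import Order.TTheory GRing.Theory Num.Theory.
Local Open Scope ring_scope.
Set Implicit Arguments. Unset Strict Implicit.

Lemma connect_fwd_ind (T : finType) (e : rel T) (P : T -> Prop) c :
  P c -> (forall x y, P x -> e x y -> P y) -> forall v, connect e c v -> P v.
Proof.
move=> Pc Pe v /connectP[p]; elim/last_ind: p v => [|p z IH] v /=; first by move=> _ ->.
rewrite rcons_path last_rcons => /andP[ep ez] ->.
exact: Pe (IH _ ep erefl) ez.
Qed.

Section MAPTreeUpperBounds.
Variables (R : realType) (N F : nat).
Variables (X : 'I_N -> 'I_F -> bool) (Y : 'I_N -> bool).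
Variables (rho1 rho0 alpha beta : R).

Local Notation node := (node N F).
Local Notation edge := (edge N F X).
Local Notation isOr := (isOr N F).
Local Notation isAnd := (isAnd N F).
Local Notation depth := (depth N F).
Local Notation andch := (andch N F X).
Local Notation term := (term N F).
Local Notation ecost := (ecost R N F X Y rho1 rho0 alpha beta).
Local Notation ps_cost := (ps_cost R N F X Y rho1 rho0 alpha beta).
Local Notation partial_sol := (partial_sol N F X).
Local Notation min_ps := (min_ps R N F X Y rho1 rho0 alpha beta).
Local Notation orval := (orval R N F X Y rho1 rho0 alpha beta).
Local Notation valA := (valA R N F X).
Local Notation parents := (parents N F X).
Local Notation propagate := (propagate R N F X Y rho1 rho0 alpha beta).
Local Notation descend := (descend R N F X Y rho1 rho0 alpha beta).
Local Notation iteration := (iteration R N F X Y rho1 rho0 alpha beta).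
Local Notation init := (Defs.init R N F Y rho1 rho0 alpha beta).
Local Notation root := (Defs.root N F).
Local Notation edge_in S := [rel x y | [&& edge x y, x \in S & y \in S]].

Implicit Types (G S A B : {set node}).

(** * Shape of the AND/OR graph *)

Definition samples (u : node) : {set 'I_N} :=
  match u with inl (inl (J, _)) | inl (inr (J, _)) | inr ((J, _), _) => J end.

Definition rank (u : node) : nat := (depth u).*2 + ~~ isOr u.

Lemma dsuccE (d : 'I_F.+1) : (d < F)%N -> dsucc F d = d.+1 :> nat.
Proof. by move=> dF; rewrite /dsucc inordK. Qed.

Lemma edge_rank x y : edge x y -> rank y = (rank x).+1.
Proof.
case: x => [[[J d]|[J d]]|[[J d] f]]; case: y => [[[J' d']|[J' d']]|[[J' d'] f']] //=;
  rewrite /rank /=.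
- by case/andP=> _ /eqP ->; rewrite addn0 addn1.
- by case/and5P=> _ _ /eqP -> _ _; rewrite addn0 addn1.
- by case/and5P=> _ dF _ /eqP -> _; rewrite dsuccE // doubleS addn0 addn1.
Qed.

Lemma edge_irr x : edge x x = false.
Proof. by apply/negbTE/negP=> /edge_rank; lia. Qed.

Lemma edge_samples_sub x y : edge x y -> samples y \subset samples x.
Proof.
case: x => [[[J d]|[J d]]|[[J d] f]]; case: y => [[[J' d']|[J' d']]|[[J' d'] f']] //=.
- by case/andP=> /andP[_ /eqP ->].
- by case/and5P=> _ /eqP ->.
- by case/and5P=> _ _ _ _ /orP[]/eqP ->; apply/fintype.subsetP=> i; rewrite inE => /andP[].
Qed.

Lemma edge_samples_neq0 x y : edge x y -> samples y != finset.set0.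
Proof.
case: x => [[[J d]|[J d]]|[[J d] f]]; case: y => [[[J' d']|[J' d']]|[[J' d'] f']] //=.
- by case/andP=> /andP[J0 /eqP ->].
- by case/and5P=> J0 /eqP ->.
- by case/and5P=> _ _; rewrite inE => /andP[h0 h1] _ /orP[]/eqP ->.
Qed.

Lemma edge_isOr x y : edge x y -> isOr x = ~~ isOr y.
Proof.
by case: x => [[[J d]|[J d]]|[[J d] f]]; case: y => [[[J' d']|[J' d']]|[[J' d'] f']].
Qed.

Lemma isAnd_Or u : isOr u -> isAnd u = false.
Proof. by case: u => [[[J d]|[J d]]|[[J d] f]]. Qed.

Lemma isOr_andch k a : isAnd a -> isOr (andch k a).
Proof. by case: a => [[[J d]|[J d]]|[[J d] f]]. Qed.

Lemma edge_andch k u a : edge u a -> isAnd a -> edge a (andch k a).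
Proof.
case: u => [[[J d]|[J d]]|[[J d] f]]; case: a => [[[J' d']|[J' d']]|[[J' d'] f']] //= + _.
case/and5P=> J0 /eqP -> /eqP -> dF fV; rewrite J0 dF fV eqxx.
by case: k; rewrite eqxx ?orbT.
Qed.

Lemma edge_AndE a w : isAnd a -> edge a w -> w = andch false a \/ w = andch true a.
Proof.
case: a => [[[J d]|[J d]]|[[J d] f]] //= _.
case: w => [[[J' d']|[J' d']]|[[J' d'] f']] //=.
by case/and5P=> _ _ _ /eqP -> /orP[]/eqP ->; [left | right].
Qed.

Lemma edge_Or_inj x o y : isOr x -> isOr o -> edge x y -> edge o y -> x = o.
Proof.
case: x => [[[J d]|[J d]]|[[J d] f]] //; case: o => [[[J' d']|[J' d']]|[[J' d'] f']] //.
case: y => [[[J'' d'']|[J'' d'']]|[[J'' d''] f'']] //= _ _.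
- by case/andP=> /andP[_ /eqP ->] /eqP -> /andP[/andP[_ /eqP ->] /eqP ->].
- by case/and5P=> _ /eqP -> /eqP -> _ _ /and5P[_ /eqP -> /eqP -> _ _].
Qed.

Lemma depth_andch k u a : edge u a -> isAnd a ->
  depth (andch k a) = (depth u).+1 /\ (depth u < F)%N.
Proof.
case: u => [[[J d]|[J d]]|[[J d] f]]; case: a => [[[J' d']|[J' d']]|[[J' d'] f']] //=.
by case/and5P=> _ _ /eqP -> dF _ _; rewrite dsuccE.
Qed.

Lemma rank_andch k u a : edge u a -> isAnd a -> rank (andch k a) = (rank u).+2.
Proof. by move=> hua ha; rewrite (edge_rank (edge_andch k hua ha)) (edge_rank hua). Qed.

Lemma samples_andch_disjoint a :
  isAnd a -> [disjoint samples (andch false a) & samples (andch true a)].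
Proof.
case: a => [[[J d]|[J d]]|[[J d] f]] //= _.
by rewrite -setI_eq0; apply/eqP/finset.setP=> i; rewrite !inE; case: (X i f); rewrite ?andbF.
Qed.

Lemma edge_term u : isOr u -> samples u != finset.set0 -> edge u (term u).
Proof. by case: u => [[[J d]|[J d]]|[[J d] f]] //= _ ->; rewrite !eqxx. Qed.

Lemma edge_OrE u t : isOr u -> edge u t -> ~~ isAnd t -> t = term u.
Proof.
case: u => [[[J d]|[J d]]|[[J d] f]] //= _.
case: t => [[[J' d']|[J' d']]|[[J' d'] f']] //=.
by case/andP=> /andP[_ /eqP ->] /eqP ->.
Qed.

Lemma isOr_term u : isOr u -> isOr (term u) = false.
Proof. by case: u => [[[J d]|[J d]]|[[J d] f]]. Qed.

Lemma edge_term_sink u w : isOr u -> edge (term u) w = false.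
Proof. by case: u => [[[J d]|[J d]]|[[J d] f]]. Qed.

Lemma isAnd_term u : isOr u -> isAnd (term u) = false.
Proof. by case: u => [[[J d]|[J d]]|[[J d] f]]. Qed.

Lemma connect_edge_rank c v : connect edge c v -> (rank c <= rank v)%N.
Proof.
by move: v; apply: connect_fwd_ind => // x y rx /edge_rank ->; apply: leqW.
Qed.

Lemma connect_edge_samples c v : connect edge c v -> samples v \subset samples c.
Proof.
move: v; apply: connect_fwd_ind => // x y sx /edge_samples_sub sy.
exact: fintype.subset_trans sy sx.
Qed.

Lemma connect_edge_samples_neq0 c v :
  samples c != finset.set0 -> connect edge c v -> samples v != finset.set0.
Proof. by move=> c0; move: v; apply: connect_fwd_ind => // x y _ /edge_samples_neq0. Qed.

Lemma connect_andch_inj u a k k' w : edge u a -> isAnd a ->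
  connect edge (andch k a) w -> connect edge (andch k' a) w -> k = k'.
Proof.
wlog [-> ->] : k k' / k = false /\ k' = true.
  by case: k; case: k' => // /(_ false true) h *; [symmetry|]; apply: h.
move=> hua ha c0w c1w.
have /connect_edge_samples_neq0/(_ c0w)/set0Pn[i iw] :=
  edge_samples_neq0 (edge_andch false hua ha).
have /disjointFr/(_ (fintype.subsetP (connect_edge_samples c0w) i iw)) :=
  samples_andch_disjoint ha.
by rewrite (fintype.subsetP (connect_edge_samples c1w) i iw).
Qed.

Definition rooted_at c (B : {set node}) : Prop := {in B, forall v, connect edge c v}.

(** * Costs and structure of partial solutions *)

Local Notation out_cost S v := (\sum_(w in S | edge v w) ecost v w)%E.

Lemma ecost_And a w : isAnd a -> ecost a w = 0%E.
Proof. by case: a => [[[J d]|[J d]]|[[J d] f]]. Qed.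

Lemma out_cost_sub S S' v : S \subset S' ->
  {in S', forall w, edge v w -> w \in S} -> out_cost S' v = out_cost S v.
Proof.
move=> sS out; apply: eq_bigl => w; apply/andP/andP=> [[wS' vw]|[wS vw]]; split=> //.
  exact: out.
exact: (fintype.subsetP sS).
Qed.

Lemma ps_cost_set1 x : ps_cost [set x] = 0%E.
Proof.
rewrite /ps_cost big_set1 big_pred0 // => w.
by rewrite inE; case: eqP => [->|]; rewrite ?edge_irr.
Qed.

Lemma ps_cost_setU1 x S : x \notin S -> {in S, forall v, ~~ edge v x} ->
  ps_cost (x |: S) = (out_cost S x + ps_cost S)%E.
Proof.
move=> xS Sx; rewrite /ps_cost big_setU1 //=; congr (_ + _)%E.
  apply: out_cost_sub => [|w]; first exact: finset.subsetUr.
  by rewrite in_setU1 => /orP[/eqP->|//]; rewrite edge_irr.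
apply: eq_bigr => v vS; apply: out_cost_sub => [|w]; first exact: finset.subsetUr.
by rewrite in_setU1 => /orP[/eqP->|//]; rewrite (negbTE (Sx v vS)).
Qed.

Lemma ps_cost_setU A B : [disjoint A & B] ->
  {in A & B, forall v w, ~~ edge v w && ~~ edge w v} ->
  ps_cost (A :|: B) = (ps_cost A + ps_cost B)%E.
Proof.
move=> dAB AB; rewrite /ps_cost (eq_bigl [predU A & B]) => [|v]; last by rewrite inE.
rewrite bigU //; congr (_ + _)%E; apply: eq_bigr => v vX;
  apply: out_cost_sub => [|w]; rewrite ?finset.subsetUl ?finset.subsetUr // finset.in_setU.
- by case/orP=> // wB; have /andP[/negbTE-> _] := AB v w vX wB.
- by case/orP=> // wA; have /andP[_ /negbTE->] := AB w v wA vX.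
Qed.

Lemma partial_solP G u S : reflect
  [/\ S \subset G, u \in S, {in S, forall v, connect (edge_in S) u v},
      {in S, forall a w, isAnd a -> edge a w -> w \in S} &
      {in S, forall o, isOr o -> #|[set w in S | edge o w]| = 1%N}]
  (partial_sol G u S).
Proof.
apply: (iffP and5P) => [[sG uS /forall_inP cS /forall_inP aS /forall_inP oS]|[sG uS cS aS oS]].
  split=> // [a aSa w|o oSo ho]; first by move: (aS a aSa) => /implyP h /h/forallP/(_ w)/implyP.
  by apply/eqP; move: (oS o oSo) => /implyP; apply.
split=> //; apply/forall_inP.
- exact: cS.
- by move=> a /aS aSa; apply/implyP=> ha; apply/forallP=> w; apply/implyP; apply: aSa.
- by move=> o /oS oSo; apply/implyP=> /oSo ->.
Qed.

Lemma partial_sol_rooted G c S : partial_sol G c S -> rooted_at c S.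
Proof.
case/partial_solP=> _ _ cS _ _ v /cS; apply: connect_sub => x y /and3P[exy _ _].
exact: connect1.
Qed.

Section AndSolution.
Variables (u a : node) (Sk : bool -> {set node}).
Hypotheses (hua : edge u a) (ha : isAnd a).
Hypothesis Sk_rooted : forall k, rooted_at (andch k a) (Sk k).

Local Notation Sand := (u |: (a |: (Sk false :|: Sk true))).

Lemma branch_rank k v : v \in Sk k -> ((rank u).+2 <= rank v)%N.
Proof. by move=> /(Sk_rooted)/connect_edge_rank; rewrite (rank_andch k hua ha). Qed.

Lemma branch_connect k k' v w :
  v \in Sk k -> w \in Sk k' -> connect edge v w -> k = k'.
Proof.
move=> /Sk_rooted kv /Sk_rooted k'w vw.
exact: connect_andch_inj hua ha (connect_trans kv vw) k'w.
Qed.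

Lemma branches_disjoint : [disjoint Sk false & Sk true].
Proof.
apply/pred0P=> v /=; apply/negbTE/negP=> /andP[v0 v1].
by have := branch_connect v0 v1 (connect0 _ v).
Qed.

Lemma and_solution_cases v : v \in Sand -> [\/ v = u, v = a | exists k, v \in Sk k].
Proof.
rewrite !finset.in_setU1 finset.in_setU => /or4P[/eqP->|/eqP->|v0|v1].
- by constructor 1.
- by constructor 2.
- by constructor 3; exists false.
- by constructor 3; exists true.
Qed.

Lemma branch_edge k v w : v \in Sk k -> w \in Sand -> edge v w -> w \in Sk k.
Proof.
move=> vk /and_solution_cases[->|->|[k' wk']] /[dup] vw /edge_rank; have := branch_rank vk.
- lia.
- by rewrite (edge_rank hua); lia.
- by rewrite (branch_connect vk wk' (connect1 vw)).
Qed.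

Lemma and_solution_edge_root w : w \in Sand -> edge u w = (w == a).
Proof.
have ra := edge_rank hua.
case/and_solution_cases=> [->|->|[k /branch_rank wk]].
- by rewrite edge_irr; apply/esym/eqP=> ua; move: ra; rewrite ua; lia.
- by rewrite hua eqxx.
- apply/idP/eqP=> [/edge_rank|wa]; first lia.
  by move: wk; rewrite wa ra; lia.
Qed.

Lemma cost_and :
  ps_cost Sand = (ecost u a + (ps_cost (Sk false) + ps_cost (Sk true)))%E.
Proof.
have ra := edge_rank hua.
have below v : v \in Sk false :|: Sk true -> ((rank u).+2 <= rank v)%N.
  by rewrite finset.in_setU => /orP[]; apply: branch_rank.
have into_low x v : (rank x <= (rank u).+1)%N -> v \in Sk false :|: Sk true -> ~~ edge v x.
  by move=> xu /below vu; apply/negP=> /edge_rank; lia.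
have u_out : u \notin a |: (Sk false :|: Sk true).
  rewrite finset.in_setU1 negb_or; apply/andP; split.
    by apply/eqP=> ua; move: ra; rewrite ua; lia.
  by apply/negP=> /below; lia.
have into_u : {in a |: (Sk false :|: Sk true), forall v, ~~ edge v u}.
  move=> v; rewrite finset.in_setU1 => /orP[/eqP-> | ]; last by apply: into_low.
  by apply/negP=> /edge_rank; lia.
have sep : {in Sk false & Sk true, forall v w, ~~ edge v w && ~~ edge w v}.
  move=> v w v0 w1; apply/andP; split; apply/negP=> /connect1 e.
    by have := branch_connect v0 w1 e.
  by have := branch_connect w1 v0 e.
rewrite ps_cost_setU1 // ps_cost_setU1 ?ps_cost_setU ?branches_disjoint //; first last.
- by move=> v; apply: into_low; lia.
- by apply/negP=> /below; lia.
have -> : out_cost (Sk false :|: Sk true) a = 0%E by rewrite big1 // => w _; exact: ecost_And.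
rewrite add0e (out_cost_sub (S := [set a])).
- by rewrite (big_pred1 a) // => w /=; rewrite finset.in_set1; case: eqP => [->|]; rewrite ?hua.
- by rewrite finset.sub1set finset.setU11.
- move=> w wSa; rewrite finset.in_set1 -and_solution_edge_root //.
  by rewrite finset.in_setU1 wSa orbT.
Qed.

Lemma partial_sol_and G : u \in G -> a \in G -> isOr u ->
  (forall k, partial_sol G (andch k a) (Sk k)) -> partial_sol G u Sand.
Proof.
move=> uG aG hu pSk.
have Sk_sub k : Sk k \subset Sand.
  by apply/fintype.subsetP=> v vk; case: k vk => vk; rewrite !inE vk ?orbT.
have aS : a \in Sand by rewrite !inE eqxx orbT.
have chS k : andch k a \in Sk k by case/partial_solP: (pSk k).
have lift k x y : connect (edge_in (Sk k)) x y -> connect (edge_in Sand) x y.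
  apply: connect_sub => x' y' /and3P[exy xk yk]; apply: connect1.
  by rewrite /= exy !(fintype.subsetP (Sk_sub k)).
apply/partial_solP; split.
- apply/fintype.subsetP=> v /and_solution_cases[->|->|[k vk]] //.
  by case/partial_solP: (pSk k) => /fintype.subsetP sG _ _ _ _; exact: sG.
- exact: finset.setU11.
- have ua : connect (edge_in Sand) u a by apply: connect1; rewrite /= hua finset.setU11.
  move=> v /and_solution_cases[->|->|[k vk]] //.
  case/partial_solP: (pSk k) => _ _ ck _ _; apply: connect_trans ua _.
  apply: connect_trans (connect1 _) (lift k _ _ (ck v vk)).
  by rewrite /= (edge_andch k hua ha) aS (fintype.subsetP (Sk_sub k)).
- move=> v /and_solution_cases[->|->|[k vk]] w hv vw.
  + by rewrite isAnd_Or in hv.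
  + by case: (edge_AndE ha vw) => ->; apply: (fintype.subsetP (Sk_sub _)) (chS _).
  + apply: (fintype.subsetP (Sk_sub k)).
    by case/partial_solP: (pSk k) => _ _ _ /(_ v vk w hv vw).
- move=> v /and_solution_cases[->|->|[k vk]] hv.
  + apply/eqP/cards1P; exists a; apply/finset.setP=> w; rewrite finset.in_set finset.in_set1.
    case wS: (w \in Sand); first by rewrite and_solution_edge_root.
    by apply/esym/eqP=> wa; rewrite wa aS in wS.
  + by move: ha; rewrite isAnd_Or.
  + have -> : [set w in Sand | edge v w] = [set w in Sk k | edge v w].
      apply: eq_finset => w /=; apply/andP/andP=> [][wS vw]; split=> //.
        exact: branch_edge vk wS vw.
      exact: (fintype.subsetP (Sk_sub k)).
    by case/partial_solP: (pSk k) => _ _ _ _; apply.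
Qed.

End AndSolution.

Lemma cost_edge u t : edge u t -> ps_cost (u |: [set t]) = ecost u t.
Proof.
move=> hut; rewrite ps_cost_setU1 ?ps_cost_set1 ?adde0.
- by rewrite (big_pred1 t) // => w /=; rewrite finset.in_set1; case: eqP => [->|].
- by rewrite finset.in_set1; apply/eqP=> ut; rewrite ut edge_irr in hut.
- move=> v; rewrite finset.in_set1 => /eqP->.
  by apply/negP=> /edge_rank; rewrite (edge_rank hut); lia.
Qed.

Lemma partial_sol_term G u : u \in G -> term u \in G -> isOr u ->
  samples u != finset.set0 -> partial_sol G u (u |: [set term u]).
Proof.
move=> uG tG hu u0; have hut := edge_term hu u0.
have cases v : v \in u |: [set term u] -> v = u \/ v = term u.
  by rewrite finset.in_setU1 finset.in_set1 => /orP[]/eqP->; [left | right].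
have tS : term u \in u |: [set term u] by rewrite finset.setU1r ?finset.set11.
apply/partial_solP; split.
- by apply/fintype.subsetP=> v /cases[]->.
- exact: finset.setU11.
- move=> v /cases[]->; first exact: connect0.
  by apply: connect1; rewrite /= hut tS finset.setU11.
- by move=> v /cases[]-> w; rewrite ?(isAnd_Or hu) ?(isAnd_term hu).
- move=> v /cases[]->; last by rewrite (isOr_term hu).
  move=> _; apply/eqP/cards1P; exists (term u); apply/finset.setP=> w.
  rewrite finset.in_set finset.in_setU1 !finset.in_set1.
  case: (eqVneq w (term u)) => [->|_]; first by rewrite orbT hut.
  by rewrite orbF; case: eqP => [->|]; rewrite ?edge_irr.
Qed.

Definition reach S c : {set node} := [set v | connect (edge_in S) c v].

Lemma connect_edge_in S x y : connect (edge_in S) x y -> connect edge x y.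
Proof. by apply: connect_sub => x' y' /and3P[e _ _]; apply: connect1. Qed.

Lemma reach_sub S c : c \in S -> reach S c \subset S.
Proof.
move=> cS; apply/fintype.subsetP=> v; rewrite finset.in_set; move: v.
by apply: connect_fwd_ind => // x y _ /and3P[].
Qed.

Lemma reach_rooted S c : rooted_at c (reach S c).
Proof. by move=> v; rewrite finset.in_set; apply: connect_edge_in. Qed.

Lemma reach_step S c x y :
  c \in S -> x \in reach S c -> y \in S -> edge x y -> y \in reach S c.
Proof.
move=> cS xR yS xy; have xS := fintype.subsetP (reach_sub cS) x xR.
move: xR; rewrite !finset.in_set => cx.
by apply: connect_trans cx (connect1 _); rewrite /= xy xS.
Qed.

Lemma partial_sol_reach G u S c : partial_sol G u S -> c \in S -> partial_sol G c (reach S c).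
Proof.
case/partial_solP=> sG _ _ aS oS cS; have RS := reach_sub cS.
apply/partial_solP; split.
- exact: fintype.subset_trans RS sG.
- by rewrite finset.in_set connect0.
- suff conn v : connect (edge_in S) c v ->
      v \in reach S c /\ connect (edge_in (reach S c)) c v.
    by move=> v; rewrite finset.in_set => /conn[].
  move: v; apply: connect_fwd_ind => [|x y [xR cx] /and3P[xy _ yS]].
    by rewrite finset.in_set !connect0.
  have yR := reach_step cS xR yS xy; split=> //.
  by apply: connect_trans cx (connect1 _); rewrite /= xy xR.
- move=> a aR w ha aw.
  exact: reach_step cS aR (aS a (fintype.subsetP RS a aR) w ha aw) aw.
- move=> o oR ho; rewrite -(oS o (fintype.subsetP RS o oR) ho).
  apply: eq_card => w; rewrite finset.in_set [in RHS]finset.in_set.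
  apply/andP/andP=> [][wX ow]; split=> //.
    exact: (fintype.subsetP RS).
  exact: reach_step cS oR wX ow.
Qed.

Lemma partial_sol_child G u S : partial_sol G u S -> isOr u ->
  exists w, [/\ w \in S, edge u w & {in S, forall w', edge u w' -> w' = w}].
Proof.
case/partial_solP=> _ uS _ _ /(_ u uS) oS /oS/eqP/cards1P[w Sw].
have: w \in [set w' in S | edge u w'] by rewrite Sw finset.set11.
rewrite finset.in_set => /andP[wS uw]; exists w; split=> // w' w'S uw'.
by apply/finset.set1P; rewrite -Sw finset.in_set w'S.
Qed.

Lemma partial_sol_rootE G u S w : partial_sol G u S -> w \in S ->
  {in S, forall w', edge u w' -> w' = w} -> S = u |: reach S w.
Proof.
case/partial_solP=> _ uS cS _ _ wS uniq_w.
apply/eqP; rewrite finset.eqEsubset; apply/andP; split; last first.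
  by rewrite finset.subUset finset.sub1set uS reach_sub.
apply/fintype.subsetP=> v /cS; move: v; apply: connect_fwd_ind; first exact: finset.setU11.
move=> x y xU /and3P[xy xS yS]; apply/finset.setU1P; right.
case/finset.setU1P: xU => [xu|xR]; last exact: reach_step wS xR yS xy.
by rewrite xu in xy; rewrite (uniq_w y yS xy) finset.in_set connect0.
Qed.

Lemma reach_sink S t : (forall w, edge t w = false) -> reach S t = [set t].
Proof.
move=> t_sink; apply/finset.setP=> v; rewrite finset.in_set finset.in_set1.
apply/idP/eqP=> [|->]; last exact: connect0.
by move: v; apply: connect_fwd_ind => // x y -> /and3P[]; rewrite t_sink.
Qed.

Lemma reach_And S u a : edge u a -> isAnd a -> a \in S -> (forall k, andch k a \in S) ->
  reach S a = a |: (reach S (andch false a) :|: reach S (andch true a)).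
Proof.
move=> ua ha aS chS; apply/eqP; rewrite finset.eqEsubset; apply/andP; split.
  apply/fintype.subsetP=> v; rewrite finset.in_set; move: v.
  apply: connect_fwd_ind => [|x y]; first exact: finset.setU11.
  rewrite finset.in_setU1 finset.in_setU => /or3P[/eqP->|xR|xR] /and3P[xy xS yS];
    rewrite finset.in_setU1 finset.in_setU; apply/or3P.
  - by case: (edge_AndE ha xy) => ->; [constructor 2 | constructor 3];
      rewrite finset.in_set connect0.
  - by constructor 2; exact: reach_step (chS false) xR yS xy.
  - by constructor 3; exact: reach_step (chS true) xR yS xy.
have aR : a \in reach S a by rewrite finset.in_set connect0.
have chR k : andch k a \in reach S a.
  by apply: reach_step aS aR (chS k) (edge_andch k ua ha).
have sub k : reach S (andch k a) \subset reach S a.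
  apply/fintype.subsetP=> v; rewrite !finset.in_set; apply: connect_trans.
  by have := chR k; rewrite finset.in_set.
by rewrite finset.subUset finset.sub1set aR finset.subUset !sub.
Qed.

(** * The Bellman equation for minimum costs *)

Lemma nlog_neq_ninfty x : nlog R x != -oo%E.
Proof. by rewrite /nlog; case: ifP. Qed.

Lemma ecost_neq_ninfty u w : ecost u w != -oo%E.
Proof.
case: u => [[[J d]|[J d]]|[[J d] f]]; case: w => [[[J' d']|[J' d']]|[[J' d'] f']] //=;
  by rewrite ?adde_eq_ninfty ?negb_or ?nlog_neq_ninfty.
Qed.

Lemma ps_cost_neq_ninfty S : ps_cost S != -oo%E.
Proof.
pose P (x : \bar R) := x != -oo%E.
have addP x y : P x -> P y -> P (x + y)%E by rewrite /P adde_eq_ninfty negb_or => -> ->.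
by apply: (big_ind P) => // v _; apply: (big_ind P) => // w _; exact: ecost_neq_ninfty.
Qed.

Lemma min_ps_neq_ninfty G u : min_ps G u != -oo%E.
Proof.
apply: (big_ind (fun x : \bar R => x != -oo%E)) => // [x y|S _]; first by case: leP.
exact: ps_cost_neq_ninfty.
Qed.

Lemma min_ps_le G u S : partial_sol G u S -> (min_ps G u <= ps_cost S)%E.
Proof. exact: bigmin_le_cond. Qed.

Lemma le_min_ps G u x :
  (forall S, partial_sol G u S -> x <= ps_cost S)%E -> (x <= min_ps G u)%E.
Proof. by move=> h; apply: le_bigmin => //; exact: leey. Qed.

Lemma min_ps_attained G u :
  (exists2 S, partial_sol G u S & min_ps G u = ps_cost S) \/ min_ps G u = +oo%E.
Proof.
have [S pS|none] := pickP (partial_sol G u); last by right; rewrite /Defs.min_ps big_pred0.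
by left; have [S' pS' eS] := eq_bigmin S _ _ pS (fun S _ => leey (ps_cost S)); exists S'.
Qed.

Lemma le_orval v v' u :
  (forall a k, edge u a -> isAnd a -> v (andch k a) <= v' (andch k a))%E ->
  (orval v u <= orval v' u)%E.
Proof.
move=> vv'; apply: le_min2 => //; apply: le_bigmin2 => a /andP[ua ha].
by apply: leeD => //; apply: leeD; apply: vv'.
Qed.

Lemma eq_orval v v' u :
  (forall a k, edge u a -> isAnd a -> v (andch k a) = v' (andch k a)) ->
  orval v u = orval v' u.
Proof. by move=> vv'; apply/eqP; rewrite eq_le !le_orval // => a k ua ha; rewrite vv'. Qed.

Lemma orval_le_and v u a : edge u a -> isAnd a -> (orval v u <= ecost u a + valA v a)%E.
Proof.
move=> ua ha; rewrite /Defs.orval ge_min; apply/orP; left.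
by apply: bigmin_le_cond; rewrite ua ha.
Qed.

Lemma orval_le_term v u : (orval v u <= ecost u (term u))%E.
Proof. by rewrite /Defs.orval ge_min lexx orbT. Qed.

Definition expanded_in G u : Prop :=
  forall w, edge u w -> w \in G /\ forall z, edge w z -> z \in G.

Lemma min_ps_le_orval G u : isOr u -> samples u != finset.set0 -> u \in G ->
  expanded_in G u -> (min_ps G u <= orval (min_ps G) u)%E.
Proof.
move=> hu u0 uG uexp; have ut := edge_term hu u0.
rewrite le_min; apply/andP; split; last first.
  have [tG _] := uexp _ ut; rewrite -(cost_edge ut).
  exact/min_ps_le/partial_sol_term.
apply: le_bigmin => [|a /andP[ua ha]]; first exact: leey.
have [aG /(_ _ (edge_andch _ ua ha)) chG] := uexp a ua.
rewrite /Defs.valA.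
have [[S0 pS0 ->]|->] := min_ps_attained G (andch false a); last first.
  by rewrite addye ?min_ps_neq_ninfty // addey ?ecost_neq_ninfty // leey.
have [[S1 pS1 ->]|->] := min_ps_attained G (andch true a); last first.
  by rewrite addey ?ps_cost_neq_ninfty // addey ?ecost_neq_ninfty // leey.
pose Sk k := if k then S1 else S0.
have pSk k : partial_sol G (andch k a) (Sk k) by case: k.
have rooted k := partial_sol_rooted (pSk k).
rewrite -(cost_and ua ha rooted); apply: min_ps_le; exact: partial_sol_and.
Qed.

Lemma orval_le_min_ps G u : isOr u -> (orval (min_ps G) u <= min_ps G u)%E.
Proof.
move=> hu; apply: le_min_ps => S pS.
have [w [wS uw uniq_w]] := partial_sol_child pS hu.
rewrite (partial_sol_rootE pS wS uniq_w).
have [hw|hw] := boolP (isAnd w).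
  have chS k : andch k w \in S.
    by case/partial_solP: pS => _ _ _ aS _; exact: aS w wS _ hw (edge_andch k uw hw).
  rewrite (reach_And uw hw wS chS) (cost_and uw hw (fun k => @reach_rooted S (andch k w))).
  apply: le_trans (orval_le_and _ uw hw) _; apply: leeD => //.
  by apply: leeD; apply: min_ps_le; exact: partial_sol_reach pS (chS _).
have wt := edge_OrE hu uw hw.
rewrite reach_sink; last by rewrite wt => z; exact: edge_term_sink.
by rewrite cost_edge // wt orval_le_term.
Qed.

Lemma min_ps_orval G u : isOr u -> samples u != finset.set0 -> u \in G ->
  expanded_in G u -> min_ps G u = orval (min_ps G) u.
Proof. by move=> *; apply/eqP; rewrite eq_le min_ps_le_orval // orval_le_min_ps. Qed.

Lemma min_ps_leaf G u : isOr u -> {in G, forall w, ~~ edge u w} -> min_ps G u = +oo%E.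
Proof.
move=> hu leaf; rewrite /Defs.min_ps big_pred0 // => S; apply/negbTE/negP=> pS.
have [w [wS uw _]] := partial_sol_child pS hu.
case/partial_solP: pS => /fintype.subsetP sG _ _ _ _.
by move: (leaf w (sG w wS)); rewrite uw.
Qed.

Lemma le_min_ps_subset G G' u : G \subset G' -> (min_ps G' u <= min_ps G u)%E.
Proof.
move=> GG'; apply: le_min_ps => S /partial_solP[sG uS cS aS oS]; apply: min_ps_le.
by apply/partial_solP; split=> //; exact: fintype.subset_trans sG GG'.
Qed.

(** * Expanded nodes and backward propagation *)

Record expansion_inv (G E : {set node}) : Prop := ExpansionInv {
  inv_expanded : {in E, forall u, expanded_in G u};
  inv_leaf : forall x y, isOr x -> edge x y -> y \in G -> x \in E;
  inv_samples : {in G, forall u, samples u != finset.set0};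
  inv_sub : E \subset G;
  inv_isOr : {in E, forall u, isOr u}
}.

Section Expansion.
Variables (G E : {set node}).
Hypothesis GE : expansion_inv G E.

Lemma min_ps_expanded u : u \in E -> min_ps G u = orval (min_ps G) u.
Proof.
move=> uE; have uG := fintype.subsetP (inv_sub GE) u uE.
exact: min_ps_orval (inv_isOr GE uE) (inv_samples GE uG) uG (inv_expanded GE uE).
Qed.

Lemma min_ps_unexpanded u : isOr u -> u \notin E -> min_ps G u = +oo%E.
Proof.
move=> hu uE; apply: min_ps_leaf => // w wG; apply: contra uE => uw.
exact: (inv_leaf GE hu uw wG).
Qed.

Lemma andch_expanded u a k : u \in E -> edge u a -> isAnd a -> a \in G /\ andch k a \in G.
Proof.
move=> uE ua ha; have [aG chG] := inv_expanded GE uE ua.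
by split; last exact: chG _ (edge_andch k ua ha).
Qed.

Lemma parents_expanded u : parents G u \subset E.
Proof.
apply/fintype.subsetP=> w; rewrite finset.in_set.
by case/and3P=> _ hw /existsP[a /andP[aG /and3P[_ wa _]]]; exact: (inv_leaf GE hw wa aG).
Qed.

End Expansion.

Section Propagation.
Variables (G E : {set node}) (T : node -> \bar R).
Hypotheses (GE : expansion_inv G E) (T_fix : {in E, forall u, T u = orval T u}).

Definition ub_bounds (Q : {set node}) (v : node -> \bar R) : Prop :=
  {in G, forall u, isOr u -> T u <= v u}%E /\
  {in E, forall u, u \notin Q -> v u <= orval v u}%E.

Lemma ub_bounds_update Q v u : u \in E -> ub_bounds Q v ->
  ub_bounds ((Q :\ u) :|: parents G u) (fun w => if w == u then orval v u else v w).
Proof.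
move=> uE [lo up]; set v1 := fun w => _.
have orval_v1 w : w \in E -> w \notin parents G u -> orval v1 w = orval v w.
  move=> wE wP; apply: eq_orval => a k wa ha; rewrite /v1; case: eqP => // chu.
  case/negP: wP; have [aG _] := andch_expanded GE k wE wa ha.
  rewrite finset.in_set (fintype.subsetP (inv_sub GE) w wE) (inv_isOr GE wE) /=.
  by apply/existsP; exists a; rewrite aG ha wa -chu (edge_andch k wa ha).
split=> [w wG hw|w wE].
  rewrite /v1; case: eqP => [->|_]; last exact: lo.
  rewrite T_fix //; apply: le_orval => a k ua ha.
  have [_ chG] := andch_expanded GE k uE ua ha.
  exact: lo _ chG (isOr_andch k ha).
rewrite finset.in_setU finset.in_setD1 negb_or negb_and negbK => /andP[wQ wP].
rewrite orval_v1 // /v1; case: eqP => [->|/eqP wu]; first exact: lexx.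
by apply: up => //; rewrite (negbTE wu) in wQ.
Qed.

Lemma ub_bounds_skip Q v u : ~~ (orval v u < v u)%E -> ub_bounds Q v -> ub_bounds (Q :\ u) v.
Proof.
move=> not_better [lo up]; split=> // w wE.
by rewrite finset.in_setD1 negb_and negbK => /orP[/eqP->|]; [rewrite leNgt | exact: up].
Qed.

Lemma propagate_ub Q v v' : propagate (fun nw old => nw < old)%E G Q v v' ->
  Q \subset E -> ub_bounds Q v ->
  ub_bounds finset.set0 v' /\ forall u, u \notin E -> v' u = v u.
Proof.
elim=> {Q v v'} [v|Q v v' u uQ _ _ IH] QE bnd; first by split.
have uE := fintype.subsetP QE u uQ.
have QuE : Q :\ u \subset E by apply: fintype.subset_trans (finset.subD1set Q u) QE.
move: IH; case: ifP => better IH; last exact: IH QuE (ub_bounds_skip (negbT better) bnd).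
have QE' : (Q :\ u) :|: parents G u \subset E.
  by rewrite finset.subUset QuE (parents_expanded GE).
have [bnd' off] := IH QE' (ub_bounds_update uE bnd).
split=> // w wE; rewrite off //=; case: eqP => // wu.
by rewrite wu uE in wE.
Qed.

Lemma ub_bounds_eq v : ub_bounds finset.set0 v ->
  {in G, forall u, isOr u -> u \notin E -> v u = T u} ->
  {in G, forall u, isOr u -> v u = T u}.
Proof.
move=> [lo up] leaf.
suff eqT n u : (F - depth u < n)%N -> u \in G -> isOr u -> v u = T u.
  by move=> u; apply: eqT (ltnSn _).
elim: n u => // n IH u un uG hu.
have [uE|uE] := boolP (u \in E); last exact: leaf.
have child_eq a k : edge u a -> isAnd a -> v (andch k a) = T (andch k a).
  move=> ua ha; have [_ chG] := andch_expanded GE k uE ua ha.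
  have [dch dF] := depth_andch k ua ha.
  by apply: IH chG (isOr_andch k ha); rewrite dch; lia.
apply/eqP; rewrite eq_le lo // andbT [T u]T_fix // -(eq_orval child_eq).
by apply: up; rewrite ?finset.in_set0.
Qed.

End Propagation.

(** * The main loop *)

Record ub_inv (s : state R N F) : Prop := UbInv {
  ub_expansion : expansion_inv (Gp s) (Ex s);
  ub_root : root \in Gp s;
  ub_exact : {in Gp s, forall u, isOr u -> UB s u = min_ps (Gp s) u};
  ub_outside : forall u, u \notin Gp s -> UB s u = +oo%E
}.

Lemma descend_unexpanded s x y : expansion_inv (Gp s) (Ex s) -> descend s x y ->
  x \in Gp s -> isOr x -> [/\ y \in Gp s, isOr y & y \notin Ex s].
Proof.
move=> GE; elim=> [z zE | z a z' zE za ha _ _ IH] zG hz; first by split.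
have chG k : andch k a \in Gp s := proj2 (andch_expanded GE k zE za ha).
by apply: IH; case: ifP => _; rewrite ?chG ?(isOr_andch _ ha).
Qed.

Lemma expansion_inv_expand G E o : expansion_inv G E -> o \in G -> isOr o ->
  expansion_inv (G :|: [set w | edge o w] :|: [set w | [exists a, edge o a && edge a w]])
                (o |: E).
Proof.
move=> GE oG ho; set G' := _ :|: _ :|: _.
have GG' : G \subset G' by apply/fintype.subsetP=> w wG; rewrite !finset.inE wG.
have child w : edge o w -> w \in G' by move=> ow; rewrite !finset.inE ow orbT.
have grandchild w z : edge o w -> edge w z -> z \in G'.
  by move=> ow wz; rewrite !finset.inE; apply/orP; right; apply/existsP; exists w; rewrite ow.
split.
- move=> x /finset.setU1P[->|xE] w xw.
    by split=> [|z]; [exact: child | exact: grandchild].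
  have [wG wz] := inv_expanded GE xE xw.
  by split=> [|z /wz]; apply: (fintype.subsetP GG').
- move=> x y hx xy; rewrite !finset.inE => /orP[/orP[yG|oy]|/existsP[a /andP[oa ay]]].
  + by rewrite (inv_leaf GE hx xy yG) orbT.
  + by rewrite (edge_Or_inj hx ho xy oy) eqxx.
  + move: (edge_isOr oa) (edge_isOr ay) (edge_isOr xy); rewrite ho hx.
    by case: (isOr a); case: (isOr y).
- move=> u; rewrite !finset.inE.
  case/orP=> [/orP[uG|/edge_samples_neq0 //]|/existsP[a /andP[_ /edge_samples_neq0 //]]].
  exact: (inv_samples GE uG).
- rewrite finset.subUset finset.sub1set (fintype.subsetP GG') //.
  exact: fintype.subset_trans (inv_sub GE) GG'.
- by move=> x /finset.setU1P[->|/(inv_isOr GE)].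
Qed.

Lemma ub_inv_init : (0 < N)%N -> ub_inv init.
Proof.
move=> N0.
have GE : expansion_inv [set root] finset.set0.
  split.
  - by move=> x; rewrite finset.in_set0.
  - by move=> x y hx xy /finset.set1P yr; move: (edge_isOr xy); rewrite hx yr.
  - by move=> u /finset.set1P ->; apply/set0Pn; exists (Ordinal N0); rewrite finset.in_setT.
  - exact: finset.sub0set.
  - by move=> x; rewrite finset.in_set0.
split=> //= [|u uG hu]; first exact: finset.set11.
by rewrite (min_ps_unexpanded GE hu) ?finset.in_set0.
Qed.

Section Step.
Variables (s : state R N F) (x : node).
Hypotheses (Is : ub_inv s) (xG : x \in Gp s) (hx : isOr x).

Local Notation G' :=
  (Gp s :|: [set w | edge x w] :|: [set w | [exists a, edge x a && edge a w]]).
Local Notation E' := (x |: Ex s).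

Lemma Gp_sub_expand : Gp s \subset G'.
Proof. by apply/fintype.subsetP=> w wG; rewrite !finset.inE wG. Qed.

Lemma ub_bounds_expand : ub_bounds G' E' (min_ps G') [set x] (UB s).
Proof.
have GE := ub_expansion Is.
split=> [u uG' hu|u uE'].
  have [uG|uG] := boolP (u \in Gp s); last by rewrite ub_outside // leey.
  by rewrite ub_exact // le_min_ps_subset // Gp_sub_expand.
rewrite finset.in_set1 => ux.
have uE : u \in Ex s by move: uE'; rewrite finset.in_setU1 (negbTE ux).
rewrite ub_exact ?(fintype.subsetP (inv_sub GE)) ?(inv_isOr GE uE) //.
rewrite (min_ps_expanded GE uE); apply: le_orval => a k ua ha.
have [_ chG] := andch_expanded GE k uE ua ha.
by rewrite ub_exact ?(isOr_andch k ha).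
Qed.

Lemma ub_unexpanded_expand :
  {in G', forall u, isOr u -> u \notin E' -> UB s u = min_ps G' u}.
Proof.
have GE' := expansion_inv_expand (ub_expansion Is) xG hx.
move=> u _ hu uE'; rewrite (min_ps_unexpanded GE' hu uE').
have [uG|uG] := boolP (u \in Gp s); last exact: ub_outside.
have uE : u \notin Ex s by apply: contra uE'; exact: finset.setU1r.
by rewrite ub_exact // (min_ps_unexpanded (ub_expansion Is) hu uE).
Qed.

End Step.

Lemma ub_inv_step s s' : ub_inv s -> iteration s s' -> ub_inv s'.
Proof.
move=> Is [_ [x [hd [lb [ub [_ [hprop ->]]]]]]] /=.
have [xG hx _] := descend_unexpanded (ub_expansion Is) hd (ub_root Is) (erefl true).
have GE' := expansion_inv_expand (ub_expansion Is) xG hx.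
have T_fix := min_ps_expanded GE'.
have xE' : [set x] \subset x |: Ex s by rewrite finset.sub1set finset.setU11.
have [bnd off] := propagate_ub GE' T_fix hprop xE' (ub_bounds_expand x Is).
split=> // [|u uG' hu|u uG'].
- exact: (fintype.subsetP (Gp_sub_expand s x)) (ub_root Is).
- apply: (ub_bounds_eq GE' T_fix bnd) => // w wG' hw wE'.
  by rewrite (off w wE') (ub_unexpanded_expand Is xG hx).
- rewrite /= off; last by apply: contra uG'; apply: (fintype.subsetP (inv_sub GE')).
  by apply: (ub_outside Is); apply: contra uG'; apply: (fintype.subsetP (Gp_sub_expand s x)).
Qed.

End MAPTreeUpperBounds.

Theorem lemma16 (R : realType) (N F : nat)
  (X : 'I_N -> 'I_F -> bool) (Y : 'I_N -> bool) (rho1 rho0 alpha beta : R) :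
  (0 < N)%N -> 0 < rho1 -> 0 < rho0 -> 0 < alpha -> alpha < 1 -> 0 <= beta ->
  forall s s' : state R N F,
    reachable R N F X Y rho1 rho0 alpha beta s ->
    iteration R N F X Y rho1 rho0 alpha beta s s' ->
    forall u : node N F, u \in Gp s' -> isOr N F u ->
      UB s' u = min_ps R N F X Y rho1 rho0 alpha beta (Gp s') u.
Proof.
move=> N0 _ _ _ _ _ s s' reach_s iter_s u uG hu.
have inv_s : ub_inv X Y rho1 rho0 alpha beta s.
  elim: reach_s => [|s0 s1 _ inv0 iter0]; first exact: ub_inv_init.
  exact: ub_inv_step inv0 iter0.
exact: ub_exact (ub_inv_step inv_s iter_s) u uG hu.
Qed.
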